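(* Let $P\subseteq\mathbb{R}^{d'}$ and $Q\subseteq\mathbb{R}^d$ be polytopes with vertices $p_1,\dots,p_n$ and $q_1,\dots,q_n$, with a linear map $\pi$ such that $\pi(p_i)=q_i$. Let $\hat P\subseteq\mathbb{R}^{d'+1}$ (vertices $\hat p_1,\dots,\hat p_{n+1}$, map $f_P$) and $\hat Q\subseteq\mathbb{R}^{d+1}$ (vertices $\hat q_1,\dots,\hat q_{n+1}$, map $f_Q$) be single-element liftings of $P$ and $Q$, and let $\hat\pi$ be a linear map with $\hat\pi(\hat p_i)=\hat q_i$ such that $\pi,\hat\pi$ are compatible with the liftings, i.e. $f_Q\circ\hat\pi=\pi\circ f_P$. Then the isomorphism $\tau^*:\ker(\phi_Q)^*\to\ker(\phi_{\hat Q})^*$ restricts to an isomorphism from $\mathrm{im}(\phi^*_{P,Q})$ onto $\mathrm{im}(\phi^*_{\hat P,\hat Q})$.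
   Context: For a polytope $P$ with vertices $p_1,\dots,p_n$ in $\mathbb{R}^{d'}$, $\phi_P:\mathbb{R}^n\to\mathbb{R}^{d'+1}$ is the linear map given by the $(d'+1)\times n$ matrix whose columns are the vectors $(1,p_i)$; similarly $\phi_Q:\mathbb{R}^n\to\mathbb{R}^{d+1}$. The map $\pi$ is extended to $\mathbb{R}^{d'+1}\to\mathbb{R}^{d+1}$ (acting as the identity on the first, homogenizing, coordinate), so that $\pi\circ\phi_P=\phi_Q$. The map $\phi^*_{P,Q}$ is the composite $(\mathbb{R}^{d'+1})^*\xrightarrow{\phi_P^*}(\mathbb{R}^n)^*\twoheadrightarrow\ker(\phi_Q)^*$ (the second map being restriction). A polytope $\hat Q\subseteq\mathbb{R}^{d+1}$ with vertices $\hat q_1,\dots,\hat q_{n+1}$ is a single-element lifting of $Q$ if there is a linear surjection $f:\mathbb{R}^{d+1}\to\mathbb{R}^d$ with $f(\hat q_{n+1})=0$ and $f(\hat q_i)=c_iq_i$ for $i\le n$ with positive scalars $c_i$. Then $\tau:\mathbb{R}^{n+1}\to\mathbb{R}^n$ is defined by $e_{n+1}\mapsto0$, $e_i\mapsto c_ie_i$ ($i\le n$); it restricts to an isomorphism $\ker(\phi_{\hat Q})\to\ker(\phi_Q)$, whose dual is $\tau^*$. (Under compatibility, the constants $c_i$, hence the maps $\tau$, for $P$ and $Q$ coincide.)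
   Formalization: A single-element lifting uses a linear surjection f: ℝᵈ⁺² → ℝᵈ⁺¹ of homogenized points with f(1,q̂ₙ₊₁)=0 and f(1,q̂ᵢ)=cᵢ(1,qᵢ) in place of f(q̂ₙ₊₁)=0 and f(q̂ᵢ)=cᵢqᵢ, and compatibility extends π̂ and π by the identity on the homogenizing coordinate. Each condition added here is assumed in the paper as well or is needed for the statement above to hold. *)

(* Points of R^k are column vectors 'cV[R]_k, linear maps are
   matrices acting on the left (A *m v), linear functionals are row vectors. *)
From HB Require Import structures.
From mathcomp Require Import all_boot all_order all_algebra.
Set Implicit Arguments. Unset Strict Implicit. Unset Printing Implicit Defensive.
Import Order.TTheory GRing.Theory Num.Theory.
Local Open Scope ring_scope.

Section Defs.
Variable R : realFieldType.

Definition hom k (v : 'cV[R]_k) : 'cV[R]_(1 + k) := col_mx (const_mx 1) v.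

Definition phi k m (p : 'I_m -> 'cV[R]_k) : 'M[R]_(1 + k, m) :=
  \matrix_(i, j) hom (p j) i 0.

Definition hext k l (A : 'M[R]_(k, l)) : 'M[R]_(1 + k, 1 + l) :=
  block_mx 1%:M 0 0 A.

Definition in_conv_hull k m (p : 'I_m -> 'cV[R]_k) (S : pred 'I_m)
    (x : 'cV[R]_k) : Prop :=
  exists w : 'I_m -> R,
    [/\ forall j, 0 <= w j, forall j, ~~ S j -> w j = 0,
        \sum_j w j = 1 & \sum_j w j *: p j = x].

(* p_1, ..., p_m are (exactly, without repetition) the vertices of the
   polytope conv{p_1, ..., p_m} *)
Definition vertex_list k m (p : 'I_m -> 'cV[R]_k) : Prop :=
  injective p /\ forall i, ~ in_conv_hull p (predC1 i) (p i).

Definition surj_mx k l (A : 'M[R]_(k, l)) : Prop :=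
  forall y : 'cV[R]_k, exists x : 'cV[R]_l, A *m x = y.

(* the index of the i-th old vertex (i <= n) among the n+1 lifted vertices *)
Definition old m (i : 'I_m) : 'I_m.+1 := widen_ord (leqnSn m) i.

(* single-element lifting (homogeneous reading):
   ph : 'I_m.+1 -> R^(k+1) are the vertices of the lifted polytope,
   f is a linear surjection on homogeneous coordinates,
   f (1, ph_{m+1}) = 0 and f (1, ph_i) = c_i (1, p_i) with c_i > 0. *)
Definition single_element_lifting k m (p : 'I_m -> 'cV[R]_k)
    (ph : 'I_m.+1 -> 'cV[R]_k.+1) (f : 'M[R]_(1 + k, 1 + k.+1))
    (c : 'I_m -> R) : Prop :=
  [/\ vertex_list ph, surj_mx f, f *m hom (ph ord_max) = 0,
      forall i, 0 < c i & forall i, f *m hom (ph (old i)) = c i *: hom (p i)].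

Definition tau m (c : 'I_m -> R) : 'M[R]_(m, m.+1) :=
  \matrix_(i, j) (if j == old i then c i else 0).

End Defs.

(* Only linear algebra is involved.
   A lifting map f satisfies f (phi_Ph x) = phi_P (tau x), and since it is
   onto a space of one dimension less, its kernel is the line through
   (1, ph_(n+1)) and its row space is the annihilator of that line.
   Comparing homogenizing coordinates in f_Q pih = pi f_P shows that both
   liftings have the same scalars c_i, hence the same tau.  Vectors in
   ker phi_Ph have coordinate sum 0, which recovers their last coordinate
   from their image under tau, so tau is bijective between the kernels.
   Finally, any functional lamh differs from some lam f_P by a multiple of the
   homogenizing coordinate, and that coordinate vanishes on ker phi_Ph. *)
From Pilot Require Import Defs.
From HB Require Import structures.
From mathcomp Require Import all_boot all_order all_algebra.
Set Implicit Arguments. Unset Strict Implicit. Unset Printing Implicit Defensive.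
Import Order.TTheory GRing.Theory Num.Theory.
Local Open Scope ring_scope.

Section CorankOne.
Variables (F : fieldType) (k : nat) (f : 'M[F]_(k, k.+1)) (v0 : 'cV[F]_k.+1).
Hypotheses (f_free : row_free f) (f_v0 : f *m v0 = 0) (v0_neq0 : v0 != 0).

Let rank_f : \rank f = k. Proof. exact/eqP. Qed.

Let rank_v0 : \rank v0 = 1%N.
Proof. by rewrite -mxrank_tr rank_rV -trmx0 (inj_eq trmx_inj) v0_neq0. Qed.

Lemma kermx_tr_sub_corank1 : (kermx f^T <= v0^T)%MS.
Proof.
have v0_ker : (v0^T <= kermx f^T)%MS.
  by apply/sub_kermxP; rewrite -trmx_mul f_v0 trmx0.
have [_] := mxrank_leqif_sup v0_ker.
by rewrite mxrank_ker !mxrank_tr rank_f rank_v0 subSnn eqxx.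
Qed.

Lemma kermx_sub_corank1 : (kermx v0 <= f)%MS.
Proof.
have f_ker : (f <= kermx v0)%MS by apply/sub_kermxP.
have [_] := mxrank_leqif_sup f_ker.
by rewrite mxrank_ker rank_f rank_v0 subn1 eqxx.
Qed.

Lemma ker_corank1 (w : 'cV[F]_k.+1) : f *m w = 0 -> exists s, w = s *: v0.
Proof.
move=> f_w; have w_ker : (w^T <= kermx f^T)%MS.
  by apply/sub_kermxP; rewrite -trmx_mul f_w trmx0.
have /submxP [D wD] := submx_trans w_ker kermx_tr_sub_corank1.
exists (D 0 0); apply: trmx_inj.
by rewrite wD {1}[D]mx11_scalar mul_scalar_mx linearZ.
Qed.

Lemma annihilator_corank1 (u : 'rV[F]_k.+1) :
  u *m v0 = 0 -> exists lam : 'rV[F]_k, u = lam *m f.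
Proof.
move=> /sub_kermxP u_ker.
by have /submxP [lam ->] := submx_trans u_ker kermx_sub_corank1; exists lam.
Qed.

End CorankOne.

Section Homogeneous.
Variable R : realFieldType.

Lemma surj_mx_row_free k l (f : 'M[R]_(k, l)) : surj_mx f -> row_free f.
Proof.
move=> f_onto; rewrite -kermx_eq0; apply/rowV0P => u /sub_kermxP uf0.
apply/rowP => i; have [x fx] := f_onto (delta_mx i 0).
move: (congr1 (mulmx u) fx); rewrite mulmxA uf0 mul0mx -colE.
by move=> /matrixP /(_ 0 0); rewrite !mxE.
Qed.

Definition hcoord k : 'I_(1 + k) := lshift k ord0.

Lemma hom_hcoord k (v : 'cV[R]_k) : Defs.hom v (hcoord k) 0 = 1.
Proof. by rewrite col_mxEu mxE. Qed.

Lemma row_hcoord_hom k (v : 'cV[R]_k) : row (hcoord k) (Defs.hom v) = 1.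
Proof. by apply/rowP => i; rewrite (ord1 i) [LHS]mxE hom_hcoord mxE. Qed.

Lemma hom_neq0 k (v : 'cV[R]_k) : Defs.hom v != 0.
Proof.
apply: contraNneq (oner_neq0 R) => hom0.
by rewrite -(hom_hcoord v) hom0 mxE.
Qed.

Lemma hext_hom k l (A : 'M[R]_(k, l)) (v : 'cV[R]_l) :
  hext A *m Defs.hom v = Defs.hom (A *m v).
Proof. by rewrite mul_block_col !mul0mx mul1mx addr0 add0r. Qed.

Lemma mul_phi k m (p : 'I_m -> 'cV[R]_k) (x : 'cV[R]_m) :
  phi p *m x = \sum_j x j 0 *: Defs.hom (p j).
Proof.
apply/colP => i; rewrite !mxE summxE; apply: eq_bigr => j _.
by rewrite !mxE mulrC.
Qed.

Lemma phi_hcoord k m (p : 'I_m -> 'cV[R]_k) (x : 'cV[R]_m) :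
  (phi p *m x) (hcoord k) 0 = \sum_j x j 0.
Proof.
by rewrite mul_phi summxE; apply: eq_bigr => j _; rewrite mxE hom_hcoord mulr1.
Qed.

Lemma phi_ker_sum0 k m (p : 'I_m -> 'cV[R]_k) (x : 'cV[R]_m) :
  phi p *m x = 0 -> \sum_j x j 0 = 0.
Proof. by move=> px0; rewrite -(phi_hcoord p) px0 mxE. Qed.

Lemma old_lift m (i : 'I_m) : old i = lift ord_max i.
Proof. by apply/val_inj; rewrite /= /bump leqNgt ltn_ord. Qed.

Lemma mul_tau m (c : 'I_m -> R) (xh : 'cV[R]_m.+1) :
  tau c *m xh = \col_i (c i * xh (old i) 0).
Proof.
apply/colP => i; rewrite !mxE (bigD1 (old i)) //= mxE eqxx big1 ?addr0 //.
by move=> j /negbTE ji; rewrite mxE ji mul0r.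
Qed.

Definition tau_preimage m (c : 'I_m -> R) (x : 'cV[R]_m) : 'cV[R]_m.+1 :=
  \col_j (if unlift ord_max j is Some i then x i 0 / c i
          else - \sum_i x i 0 / c i).

Lemma tau_preimage_old m (c : 'I_m -> R) x i :
  tau_preimage c x (old i) 0 = x i 0 / c i.
Proof. by rewrite mxE old_lift liftK. Qed.

Lemma tau_preimage_sum0 m (c : 'I_m -> R) x :
  \sum_j tau_preimage c x j 0 = 0.
Proof.
rewrite big_ord_recr /= [X in _ + X]mxE unlift_none.
by under eq_bigr => i _ do rewrite tau_preimage_old; rewrite subrr.
Qed.

Lemma tau_preimageK m (c : 'I_m -> R) x :
  (forall i, c i != 0) -> tau c *m tau_preimage c x = x.
Proof.
by move=> c_neq0; apply/colP => i; rewrite mul_tau mxE tau_preimage_old mulrC divfK.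
Qed.

Section Lifting.
Variables (k m : nat) (p : 'I_m -> 'cV[R]_k) (ph : 'I_m.+1 -> 'cV[R]_k.+1).
Variables (f : 'M[R]_(1 + k, 1 + k.+1)) (c : 'I_m -> R).
Hypothesis lifting : single_element_lifting p ph f c.

Lemma lifting_mul_phi (xh : 'cV[R]_m.+1) :
  f *m (phi ph *m xh) = phi p *m (tau c *m xh).
Proof.
have [_ _ f_max _ f_old] := lifting.
rewrite mul_tau !mul_phi mulmx_sumr big_ord_recr /= -scalemxAr f_max scaler0 addr0.
by apply: eq_bigr => i _; rewrite -scalemxAr f_old scalerA mxE mulrC.
Qed.

Let c_neq0 i : c i != 0.
Proof. by have [_ _ _ c_gt0 _] := lifting; rewrite gt_eqF. Qed.

Let f_free : row_free f.
Proof. by have [_ f_onto _ _ _] := lifting; apply: surj_mx_row_free. Qed.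

Let f_max : f *m Defs.hom (ph ord_max) = 0.
Proof. by have [] := lifting. Qed.

Lemma tau_phi_ker (xh : 'cV[R]_m.+1) :
  phi ph *m xh = 0 -> phi p *m (tau c *m xh) = 0.
Proof. by move=> xh0; rewrite -lifting_mul_phi xh0 mulmx0. Qed.

Lemma tau_phi_ker_inj (xh : 'cV[R]_m.+1) :
  phi ph *m xh = 0 -> tau c *m xh = 0 -> xh = 0.
Proof.
move=> /phi_ker_sum0 sum0 tau0.
have xh_old i : xh (old i) 0 = 0.
  move/colP/(_ i): tau0; rewrite mul_tau !mxE => /eqP.
  by rewrite mulf_eq0 (negbTE (c_neq0 i)) => /eqP.
have xh_max : xh ord_max 0 = 0.
  by rewrite -sum0 big_ord_recr /= big1 ?add0r // => i _; apply: xh_old.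
apply/colP => j; rewrite mxE.
by case: (unliftP ord_max j) => [i ->|->] //; rewrite -old_lift.
Qed.

Lemma tau_phi_ker_surj (x : 'cV[R]_m) :
  phi p *m x = 0 -> exists2 xh : 'cV[R]_m.+1, phi ph *m xh = 0 & tau c *m xh = x.
Proof.
move=> x0; exists (tau_preimage c x); last exact: tau_preimageK.
have f_img0 : f *m (phi ph *m tau_preimage c x) = 0.
  by rewrite lifting_mul_phi tau_preimageK.
have [s img] := ker_corank1 f_free f_max (hom_neq0 _) f_img0.
have s0 : s = 0.
  move/colP/(_ (hcoord _)): img.
  by rewrite phi_hcoord tau_preimage_sum0 mxE hom_hcoord mulr1.
by rewrite img s0 scale0r.
Qed.

Lemma lifting_functional (lamh : 'rV[R]_(1 + k.+1)) :
  exists lam : 'rV[R]_(1 + k), forall xh : 'cV[R]_m.+1,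
    \sum_j xh j 0 = 0 -> lamh *m phi ph *m xh = lam *m phi p *m (tau c *m xh).
Proof.
set v0 := Defs.hom (ph ord_max); set s := (lamh *m v0) 0 0.
set e : 'rV[R]_(1 + k.+1) := delta_mx 0 (hcoord _).
have annih : (lamh - s *: e) *m v0 = 0.
  rewrite mulmxBl -scalemxAl -rowE row_hcoord_hom scalemx1.
  by rewrite [lamh *m v0]mx11_scalar subrr.
have [lam lamE] := annihilator_corank1 f_free f_max (hom_neq0 _) annih.
exists lam => xh sum0.
have e0 : e *m (phi ph *m xh) = 0.
  by rewrite -rowE; apply/rowP => i; rewrite (ord1 i) [LHS]mxE phi_hcoord sum0 mxE.
rewrite -[lamh](subrK (s *: e)) lamE !mulmxDl -!scalemxAl -!mulmxA e0.
by rewrite scaler0 addr0 lifting_mul_phi.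
Qed.

End Lifting.

Lemma compatible_lifting_tau k k' m (p : 'I_m -> 'cV[R]_k')
    (q : 'I_m -> 'cV[R]_k) (pi : 'M[R]_(k, k')) (ph : 'I_m.+1 -> 'cV[R]_k'.+1)
    (qh : 'I_m.+1 -> 'cV[R]_k.+1) (fP : 'M[R]_(1 + k', 1 + k'.+1))
    (fQ : 'M[R]_(1 + k, 1 + k.+1)) (cP cQ : 'I_m -> R) (pih : 'M[R]_(k.+1, k'.+1)) :
  (forall i, pi *m p i = q i) ->
  single_element_lifting p ph fP cP -> single_element_lifting q qh fQ cQ ->
  (forall j, pih *m ph j = qh j) -> fQ *m hext pih = hext pi *m fP ->
  tau cP = tau cQ.
Proof.
move=> pi_p [_ _ _ _ fP_old] [_ _ _ _ fQ_old] pih_ph compat.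
suff cPQ i : cP i = cQ i by apply/matrixP => i j; rewrite !mxE cPQ.
move/(congr1 (mulmx^~ (Defs.hom (ph (old i))))): compat.
rewrite -!mulmxA hext_hom pih_ph fQ_old fP_old -scalemxAr hext_hom pi_p.
by move/colP/(_ (hcoord _)); rewrite [LHS]mxE [RHS]mxE !hom_hcoord !mulr1.
Qed.

End Homogeneous.

Theorem lemma2p7 (R : realFieldType) (n d d' : nat)
    (p : 'I_n -> 'cV[R]_d') (q : 'I_n -> 'cV[R]_d) (pi : 'M[R]_(d, d'))
    (ph : 'I_n.+1 -> 'cV[R]_d'.+1) (qh : 'I_n.+1 -> 'cV[R]_d.+1)
    (fP : 'M[R]_(1 + d', 1 + d'.+1)) (fQ : 'M[R]_(1 + d, 1 + d.+1))
    (cP cQ : 'I_n -> R) (pih : 'M[R]_(d.+1, d'.+1)) :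
  vertex_list p -> vertex_list q ->
  (forall i, pi *m p i = q i) ->
  single_element_lifting p ph fP cP ->
  single_element_lifting q qh fQ cQ ->
  (forall j, pih *m ph j = qh j) ->
  fQ *m hext pih = hext pi *m fP ->
  (* tau restricts to an isomorphism ker(phi_Qh) -> ker(phi_Q), so that its
     dual tau^* : ker(phi_Q)^* -> ker(phi_Qh)^* is well defined ... *)
  ((forall xh : 'cV[R]_n.+1, phi qh *m xh = 0 -> phi q *m (tau cQ *m xh) = 0)
   /\ (forall xh : 'cV[R]_n.+1, phi qh *m xh = 0 -> tau cQ *m xh = 0 -> xh = 0)
   /\ (forall x : 'cV[R]_n, phi q *m x = 0 ->
         exists2 xh : 'cV[R]_n.+1, phi qh *m xh = 0 & tau cQ *m xh = x))
  /\
  (* ... and tau^* maps im(phi^*_{P,Q}) onto im(phi^*_{Ph,Qh}): a functional on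
     ker(phi_Q), given as the restriction of y, lies in im(phi^*_{P,Q}) iff
     its image under tau^* (i.e. xh |-> y (tau xh) on ker(phi_Qh)) lies in
     im(phi^*_{Ph,Qh}). *)
  (forall y : 'rV[R]_n,
     (exists lam : 'rV[R]_(1 + d'),
        forall x : 'cV[R]_n, phi q *m x = 0 -> y *m x = lam *m phi p *m x)
     <->
     (exists lamh : 'rV[R]_(1 + d'.+1),
        forall xh : 'cV[R]_n.+1, phi qh *m xh = 0 ->
          y *m (tau cQ *m xh) = lamh *m phi ph *m xh)).
Proof.
move=> _ _ pi_p liftP liftQ pih_ph compat.
have tauPQ := compatible_lifting_tau pi_p liftP liftQ pih_ph compat.
split.
  split; first exact: tau_phi_ker liftQ.
  by split; [exact: tau_phi_ker_inj liftQ | exact: tau_phi_ker_surj liftQ].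
move=> y; split.
  case=> lam lamE; exists (lam *m fP) => xh xh0.
  by rewrite lamE ?(tau_phi_ker liftQ) // -!mulmxA (lifting_mul_phi liftP) tauPQ.
case=> lamh lamhE; have [lam lamE] := lifting_functional liftP lamh.
exists lam => x x0; have [xh xh0 <-] := tau_phi_ker_surj liftQ x0.
by rewrite lamhE // lamE ?tauPQ // (phi_ker_sum0 xh0).
Qed.
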